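(* Let $n\ge 2$ be an integer. Then $\gamma^{SLD}(P_n\square P_2)=n+1$ if $n$ is odd and $\gamma^{SLD}(P_n\square P_2)=n+2$ if $n$ is even.
   Context: $P_k$ denotes the path on $k$ vertices. The Cartesian product $G\square H$ has vertex set $V(G)\times V(H)$, with $(u,v)$ adjacent to $(u',v')$ iff either $u=u'$ and $vv'\in E(H)$, or $uu'\in E(G)$ and $v=v'$. For a vertex $u$, $N[u]$ is its closed neighbourhood. A code is a non-empty subset $C$ of the vertex set $V$; $I(C;u)=N[u]\cap C$. A code $C$ is self-locating-dominating if for every $u\in V\setminus C$ we have $I(C;u)\neq\emptyset$ and $\bigcap_{c\in I(C;u)}N[c]=\{u\}$; $\gamma^{SLD}$ is the minimum size of such a code. *)

From mathcomp Require Import all_boot.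
Set Implicit Arguments. Unset Strict Implicit. Unset Printing Implicit Defensive.

Definition closed_nbhd (T : finType) (adj : rel T) (u : T) : {set T} :=
  [set v | (v == u) || adj u v].

Definition Iset (T : finType) (adj : rel T) (C : {set T}) (u : T) : {set T} :=
  closed_nbhd adj u :&: C.

Definition is_SLD (T : finType) (adj : rel T) (C : {set T}) : bool :=
  (C != set0) &&
  [forall u, (u \notin C) ==>
     ((Iset adj C u != set0) &&
      (\bigcap_(c in Iset adj C u) closed_nbhd adj c == [set u]))].

Definition gamma_SLD_is (T : finType) (adj : rel T) (k : nat) : Prop :=
  (exists C : {set T}, is_SLD adj C /\ #|C| = k) /\
  (forall C : {set T}, is_SLD adj C -> k <= #|C|).

Definition path_adj (k : nat) : rel 'I_k :=
  fun i j => (i.+1 == j :> nat) || (j.+1 == i :> nat).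

Definition cart_adj (A B : finType) (eA : rel A) (eB : rel B) : rel (A * B) :=
  fun x y => ((x.1 == y.1) && eB x.2 y.2) || (eA x.1 y.1 && (x.2 == y.2)).

From mathcomp Require Import all_boot.
From mathcomp Require Import zify.

(* A vertex u outside an SLD code C of P_n □ P_2 must have both of its
   neighbours in its own copy of P_n inside C: otherwise the vertex of the
   other copy lying over the remaining neighbour (or over u itself) is
   dominated by every codeword near u.  Conversely, two codewords flanking u
   already separate u from every other vertex.  So each copy of P_n meets C
   in a set containing both ends of the path and missing no two consecutive
   vertices, hence in at least n./2 + 1 vertices; the even positions plus the
   last one attain this bound. *)

Lemma card_by_rows (A B : finType) (C : {set A * B}) :
  #|C| = \sum_(b : B) \sum_(a : A) ((a, b) \in C).
Proof.
rewrite exchange_big pair_big /= -sum1_card big_mkcond /=.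
by apply: eq_bigr => -[a b] _; case: (_ \in C).
Qed.

Lemma sum_even_ord k : \sum_(i < k) ~~ odd i = uphalf k.
Proof.
elim: k => [|k IHk]; first by rewrite big_ord0.
by rewrite big_ord_recr /= IHk; case: (odd k) (uphalf_half k) (uphalf_half k.+1) => /=; lia.
Qed.

Lemma sum_gap_free_ge (f : nat -> bool) k : f 0 ->
  (forall i, i < k -> f i || f i.+1) -> k.+1 + f k <= (\sum_(i < k.+1) f i).*2.
Proof.
move=> f0; elim: k => [|k IHk] gaps; first by rewrite big_ord_recr big_ord0 /= f0.
have := IHk (fun i lt_ik => gaps i (ltnW lt_ik)); have := gaps k (ltnSn k).
rewrite [in X in _ -> _ -> X]big_ord_recr /=; set S := \sum_(i < k.+1) f i; lia.
Qed.

Section LadderSLD.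

Variable m : nat.
Local Notation n := m.+2.
Local Notation V := ('I_n * 'I_2)%type.
Local Notation adj := (cart_adj (@path_adj n) (@path_adj 2)).

Lemma in_nbhdE (x y : V) : (y \in closed_nbhd adj x) =
  [|| ((y.1 : nat) == x.1) && ((y.2 : nat) == x.2),
      ((x.1 : nat) == y.1) && ((x.2.+1 == y.2) || (y.2.+1 == x.2)) |
      ((x.1.+1 == y.1) || (y.1.+1 == x.1)) && ((x.2 : nat) == y.2)].
Proof. by case: x y => [a b] [c d]; rewrite inE /cart_adj /path_adj /= xpair_eqE. Qed.

Lemma vertex_eqE (x y : V) : (x == y) = ((x.1 : nat) == y.1) && ((x.2 : nat) == y.2).
Proof. by case: x y => [a b] [c d]; rewrite xpair_eqE. Qed.

Definition flanked (C : {set V}) (u : V) : bool :=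
  [&& 0 < u.1, u.1.+1 < n, (inord u.1.-1, u.2) \in C & (inord u.1.+1, u.2) \in C].

Lemma flanked_locating (C : {set V}) (u : V) : u \notin C -> flanked C u ->
  (Iset adj C u != set0) &&
  (\bigcap_(c in Iset adj C u) closed_nbhd adj c == [set u]).
Proof.
move=> uNC /and4P[u1_gt0 u1_lt leftC rightC].
have lt_u2 := ltn_ord u.2.
have leftI : (inord u.1.-1, u.2) \in Iset adj C u.
  by rewrite in_setI leftC andbT in_nbhdE /= inordK; lia.
have rightI : (inord u.1.+1, u.2) \in Iset adj C u.
  by rewrite in_setI rightC andbT in_nbhdE /= inordK; lia.
apply/andP; split; first by apply/set0Pn; exists (inord u.1.-1, u.2).
apply/eqP/setP => v; rewrite inE; apply/bigcapP/eqP => [cap | ->].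
- apply/eqP; rewrite vertex_eqE.
  have := cap _ leftI; have := cap _ rightI; have := ltn_ord v.2.
  by rewrite !in_nbhdE /= !inordK; lia.
- by move=> c /setIP[uc _]; move: uc; rewrite !in_nbhdE; lia.
Qed.

(* The witness [w] lies over the neighbour [k]; it is dominated by every
   codeword of [N[u]] except the neighbour on the opposite side of [u]. *)
Lemma SLD_opposite_neighbour (C : {set V}) (u : V) k :
  is_SLD adj C -> u \notin C -> k < n -> (k.+1 == u.1) || (u.1.+1 == k) ->
  [/\ k <= u.1.*2, u.1.*2 - k < n & (inord (u.1.*2 - k), u.2) \in C].
Proof.
move=> /andP[_ /forallP/(_ u)/implyP locate] uNC lt_kn adj_k.
have /andP[_ /eqP cap] := locate uNC.
have lt_u2 := ltn_ord u.2.
case: (boolP [exists c in C, ((c.2 : nat) == u.2) && (c.1 + k == u.1.*2)]).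
  case/exists_inP=> -[a b] abC /andP[/= b_eq a_eq].
  have lt_a := ltn_ord a.
  have ab_eq : (a, b) = (inord (u.1.*2 - k), u.2) :> V.
    by apply/eqP; rewrite vertex_eqE /= inordK; lia.
  by rewrite -ab_eq; split=> //; lia.
move/exists_inPn=> noOpp; exfalso.
pose w : V := (inord k, inord (1 - u.2)).
have : w \in [set u].
  rewrite -cap; apply/bigcapP => c /setIP[uc cC].
  have cu : c != u by apply: contraNneq uNC => <-.
  move: uc cu (noOpp c cC); have := ltn_ord c.2.
  by rewrite !in_nbhdE vertex_eqE /w /= !inordK; lia.
by rewrite inE vertex_eqE /w /= !inordK; lia.
Qed.

Lemma SLD_flanked (C : {set V}) (u : V) :
  is_SLD adj C -> u \notin C -> flanked C u.
Proof.
move=> sld uNC; have opp k := SLD_opposite_neighbour C u k sld uNC.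
have lt_u1 := ltn_ord u.1.
have u1_gt0 : 0 < u.1 by case: (posnP u.1) => [u1_0|//]; case: (opp 1); lia.
have u1_lt : u.1.+1 < n by case: (opp u.1.-1); lia.
have leftC : (inord u.1.-1, u.2) \in C.
  have -> : u.1.-1 = u.1.*2 - u.1.+1 by lia.
  by case: (opp u.1.+1) => //; lia.
have rightC : (inord u.1.+1, u.2) \in C.
  have -> : u.1.+1 = u.1.*2 - u.1.-1 by lia.
  by case: (opp u.1.-1) => //; lia.
exact/and4P.
Qed.

Lemma is_SLD_flankedE (C : {set V}) :
  is_SLD adj C = (C != set0) && [forall u, (u \notin C) ==> flanked C u].
Proof.
apply/idP/andP => [sld | [C0 fl]].
  by split; [case/andP: sld | apply/forall_inP => u; apply: SLD_flanked].
apply/andP; split=> //; apply/forall_inP => u uNC.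
by apply: flanked_locating => //; apply: (forall_inP fl).
Qed.

Lemma SLD_row_card_gt (C : {set V}) (r : 'I_2) :
  is_SLD adj C -> n./2 < \sum_(i < n) ((i, r) \in C).
Proof.
move=> sld; have fl u : u \notin C -> flanked C u := SLD_flanked C u sld.
pose f i := (inord i, r) \in C.
have fE : \sum_(i < n) ((i, r) \in C) = \sum_(i < n) f i.
  by apply: eq_bigr => i _; rewrite /f inord_val.
have f_gap i : i < n -> ~~ f i -> 0 < i < m.+1.
  by move=> lt_in /fl/and4P[+ + _ _] /=; rewrite inordK //; lia.
have f_first : f 0 by apply: contraT => /(f_gap 0 isT).
have f_last : f m.+1 by apply: contraT => /(f_gap m.+1 (ltnSn _)); lia.
have no_two_gaps i : i < m.+1 -> f i || f i.+1.
  move=> lt_im; case fi: (f i) => //=; have /and4P[_ _ _] := fl _ (negbT fi).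
  by rewrite /f /= inordK //; lia.
have := sum_gap_free_ge f m.+1 f_first no_two_gaps.
by rewrite fE f_last; case: (odd m) (odd_double_half m); lia.
Qed.

Definition even_or_last : {set V} := [set x : V | ~~ odd x.1 || (x.1 == m.+1 :> nat)].

Lemma even_or_last_SLD : is_SLD adj even_or_last.
Proof.
rewrite is_SLD_flankedE; apply/andP; split.
  by apply/set0Pn; exists (ord0, ord0); rewrite inE.
apply/forallP => -[[i lt_in] r]; apply/implyP; rewrite inE negb_or negbK /= => /andP[odd_i i_last].
have i_gt0 : 0 < i by case: i odd_i {lt_in i_last}.
apply/and4P; split=> //=; first lia.
  by rewrite inE /= inordK; [rewrite -subn1 oddB ?odd_i | lia].
by rewrite inE /= inordK; [rewrite /= odd_i | lia].
Qed.

Lemma even_or_last_row_card (r : 'I_2) :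
  \sum_(i < n) ((i, r) \in even_or_last) = n./2.+1.
Proof.
rewrite big_ord_recr /= inE eqxx orbT addn1; congr _.+1.
rewrite -[RHS]/(uphalf m.+1) -sum_even_ord; apply: eq_bigr => i _.
by rewrite inE /= (ltn_eqF (ltn_ord i)) orbF.
Qed.

End LadderSLD.

Theorem mainTheorem17 (n : nat) (hn : 2 <= n) :
  gamma_SLD_is (cart_adj (@path_adj n) (@path_adj 2))
    (if odd n then n.+1 else n.+2).
Proof.
case: n hn => [|[|m]] // _.
have -> : (if odd m.+2 then m.+3 else m.+4) = ((m.+2)./2.+1).*2.
  by rewrite /= negbK; case: (odd m) (odd_double_half m) => /=; lia.
rewrite -addnn; split.
  exists (even_or_last m); split; first exact: even_or_last_SLD.
  by rewrite card_by_rows big_ord_recl big_ord1 !even_or_last_row_card.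
move=> C sld; rewrite card_by_rows big_ord_recl big_ord1.
by apply: leq_add; apply: SLD_row_card_gt.
Qed.
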